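(* Let $G$ be a discrete group and $1<p<\infty$, and let $B_1=\{f\in\ell^1(G):\|f\|_{A_p(G)}\le 1\}$ be the unit ball of $(\ell^1(G),\cdot,\|\cdot\|_{A_p(G)})$. Suppose $B_1$ is bounded in the $\ell^1$-norm, i.e. there is $\alpha>0$ with $\|f\|_1\le\alpha$ for all $f\in B_1$. Then: (i) $(\ell^1(G),\cdot,\|\cdot\|_{A_p(G)})$ is Arens regular; (ii) $A_p(G)$ is Arens regular; (iii) $G$ has no infinite abelian subgroup; (iv) there is no sequence $(H_n)$ of finite subgroups of $G$ with $|H_1|<|H_2|<|H_3|<\cdots$; (v) there is $M>0$ such that $O(x)\le M$ for every $x\in G$, where $O(x)$ denotes the order of $x$.
   Context: For a discrete group $G$ and $1<p<\infty$, $\frac1p+\frac1q=1$, $A_p(G)$ is the space of functions $u=\sum_{i=1}^\infty g_i*f_i^{\vee}$ with $f_i\in \ell_p(G)$, $g_i\in \ell_q(G)$, $\sum_i\|f_i\|_p\|g_i\|_q<\infty$, where $f^{\vee}(x)=f(x^{-1})$; with pointwise multiplication and norm $\|u\|_{A_p(G)}=\inf\{\sum_i\|f_i\|_p\|g_i\|_q\}$ it is a commutative Banach algebra (the Herz algebra), and $\ell^1(G)\subseteq A_p(G)$ with $\|f\|_{A_p(G)}\le\|f\|_1$. A (normed) algebra $A$ is Arens regular if for all sequences $(a_n),(b_m)$ in its closed unit ball and all $T\in A^*$, $\lim_n\lim_m T(a_nb_m)=\lim_m\lim_n T(a_nb_m)$ whenever both exist. *)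

From HB Require Import structures.
From mathcomp Require Import all_boot all_order all_algebra.
From mathcomp Require Import all_classical all_reals all_analysis.
From mathcomp Require Import complex.

Set Implicit Arguments.
Unset Strict Implicit.
Unset Printing Implicit Defensive.

Import Order.TTheory GRing.Theory Num.Theory.
Local Open Scope classical_set_scope.
Local Open Scope ring_scope.

(* A (discrete, possibly infinite) group: carrier with multiplication,
   inverse and unit satisfying the group axioms.  The carrier is a
   choiceType (every type is one classically). *)
Record dgroup := DGroup {
  gcar :> choiceType;
  gmul : gcar -> gcar -> gcar;
  ginv : gcar -> gcar;
  gone : gcar;
  gmulA : forall x y z, gmul x (gmul y z) = gmul (gmul x y) z;
  gmul1 : forall x, gmul gone x = x;
  gmulV : forall x, gmul (ginv x) x = gone }.

Section GroupTheory.
Variable G : dgroup.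

Definition is_subgroup (H : set G) : Prop :=
  H (gone G) /\ (forall x y, H x -> H y -> H (gmul x y)) /\
  (forall x, H x -> H (ginv x)).

Definition abelian_set (H : set G) : Prop :=
  forall x y, H x -> H y -> gmul x y = gmul y x.

Definition has_card (H : set G) (n : nat) : Prop :=
  exists e : 'I_n -> G, injective e /\ range e = H.

Definition gpow (x : G) (n : nat) : G := iter n (gmul x) (gone G).

(* O(x) <= M, where O(x) is the order of x: x has finite order at most M,
   i.e. x^n = 1 for some 1 <= n <= M. *)
Definition order_le (x : G) (M : nat) : Prop :=
  exists n : nat, (0 < n <= M)%N /\ gpow x n = gone G.

End GroupTheory.

Section Analysis.
Variable R : realType.
Variable G : dgroup.

Local Notation C := (R[i]).

Definition normC (z : C) : R := ComplexField.Normc.normc z.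

Definition sumR (T : choiceType) (h : T -> R) : R :=
  fine (esum [set: T] (fun x => (Num.max (h x) 0)%:E)) -
  fine (esum [set: T] (fun x => (Num.max (- h x) 0)%:E)).

Definition sumC (T : choiceType) (h : T -> C) : C :=
  Complex (sumR (fun x => complex.Re (h x))) (sumR (fun x => complex.Im (h x))).

Definition lp_mem (p : R) (f : G -> C) : Prop :=
  (esum [set: G] (fun x => (normC (f x) `^ p)%:E) < +oo)%E.

Definition lpnorm (p : R) (f : G -> C) : R :=
  (fine (esum [set: G] (fun x => (normC (f x) `^ p)%:E))) `^ (p^-1).

Definition l1_mem (f : G -> C) : Prop :=
  (esum [set: G] (fun x => (normC (f x))%:E) < +oo)%E.

Definition l1norm (f : G -> C) : R :=
  fine (esum [set: G] (fun x => (normC (f x))%:E)).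

(* conjugate exponent q, 1/p + 1/q = 1 *)
Definition conj_exp (p : R) : R := p / (p - 1).

Definition check (f : G -> C) : G -> C := fun x => f (ginv x).

Definition conv (g h : G -> C) : G -> C :=
  fun x => sumC (fun y => g y * h (gmul (ginv y) x)).

Definition rep_cost (p : R) (f g : nat -> G -> C) : \bar R :=
  esum [set: nat] (fun i => (lpnorm p (f i) * lpnorm (conj_exp p) (g i))%:E).

Definition Ap_repr (p : R) (f g : nat -> G -> C) (u : G -> C) : Prop :=
  (forall i, lp_mem p (f i) /\ lp_mem (conj_exp p) (g i)) /\
  (rep_cost p f g < +oo)%E /\
  (forall x, u x = sumC (fun i => conv (g i) (check (f i)) x)).

Definition Ap_mem (p : R) (u : G -> C) : Prop :=
  exists f g, Ap_repr p f g u.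

Definition Apnorm (p : R) (u : G -> C) : R :=
  inf [set r : R | exists f g, Ap_repr p f g u /\ r = fine (rep_cost p f g)].

Definition cvgC (u : nat -> C) (l : C) : Prop :=
  forall e : R, 0 < e -> exists N : nat, forall n, (N <= n)%N -> normC (u n - l) < e.

Definition in_dual (S : set (G -> C)) (N : (G -> C) -> R) (T : (G -> C) -> C) : Prop :=
  (forall f g, S f -> S g -> T (fun x => f x + g x) = T f + T g) /\
  (forall (c : C) f, S f -> T (fun x => c * f x) = c * T f) /\
  (exists K : R, forall f, S f -> normC (T f) <= K * N f).

Definition arens_regular (S : set (G -> C)) (N : (G -> C) -> R) : Prop :=
  forall (a b : nat -> G -> C) (T : (G -> C) -> C),
    (forall n, S (a n) /\ N (a n) <= 1) ->
    (forall m, S (b m) /\ N (b m) <= 1) ->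
    in_dual S N T ->
    forall l1 l2 : C,
      (exists L : nat -> C,
          (forall n, cvgC (fun m => T (fun x => a n x * b m x)) (L n)) /\ cvgC L l1) ->
      (exists K : nat -> C,
          (forall m, cvgC (fun n => T (fun x => a n x * b m x)) (K m)) /\ cvgC K l2) ->
      l1 = l2.

End Analysis.

From Pilot Require Import Defs.
From HB Require Import structures.
From mathcomp Require Import all_boot all_order all_algebra.
From mathcomp Require Import all_classical all_reals all_analysis.
From mathcomp Require Import complex.
From mathcomp Require Import ring.

(* If the A_p-unit ball of l^1(G) is l^1-bounded by alpha, testing it on
   n^(-1/q) times the indicator of an n-element set (whose A_p-norm is at most
   its l^q-norm, 1) gives n^(1/p) <= alpha.  Hence G is finite, which gives
   (iii)-(v) at once; and on a finite group both algebras are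
   finite-dimensional with pointwise bounded unit balls, so the iterated
   limits in the Arens condition can be computed along subsequences on which
   every coordinate converges, and then agree. *)

Import Order.TTheory GRing.Theory Num.Theory numFieldNormedType.Exports.
Local Open Scope classical_set_scope.
Local Open Scope ring_scope.
Set Implicit Arguments. Unset Strict Implicit. Unset Printing Implicit Defensive.

Section ComplexSequences.
Variable R : realType.
Local Notation C := (R[i]).
Local Notation normC := (@normC R).
Local Notation cvgC := (@cvgC R).

Lemma normC_ge0 z : 0 <= normC z.
Proof. by case: z => a b; exact: sqrtr_ge0. Qed.

Lemma normCM x y : normC (x * y) = normC x * normC y.
Proof. exact: ComplexField.Normc.normcM. Qed.

Lemma normCN z : normC (- z) = normC z.
Proof. exact: normcN. Qed.

Lemma normC_Re z : `|complex.Re z| <= normC z.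
Proof.
case: z => a b; rewrite /normC /= -sqrtr_sqr ler_sqrt ?addr_ge0 ?sqr_ge0 //.
by rewrite lerDl sqr_ge0.
Qed.

Lemma normC_Im z : `|complex.Im z| <= normC z.
Proof.
case: z => a b; rewrite /normC /= -sqrtr_sqr ler_sqrt ?addr_ge0 ?sqr_ge0 //.
by rewrite lerDr sqr_ge0.
Qed.

Lemma normC_le_ReIm z : normC z <= `|complex.Re z| + `|complex.Im z|.
Proof.
case: z => a b; rewrite /normC /=.
rewrite -(@ger0_norm _ (`|a| + `|b|)) ?addr_ge0 // -sqrtr_sqr ler_sqrt ?sqr_ge0 //.
rewrite sqrrD !real_normK ?num_real // -addrA lerD2l lerDr.
by rewrite mulrn_wge0 // mulr_ge0.
Qed.

Lemma normC_real (r : R) : 0 <= r -> normC r%:C%C = r.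
Proof. by move=> r0; rewrite /normC /= expr0n /= addr0 sqrtr_sqr ger0_norm. Qed.

Lemma cvgC_cst (c : C) : cvgC (fun=> c) c.
Proof. by move=> e e0; exists 0%N => n _; rewrite subrr /normC ComplexField.Normc.normc0. Qed.

Lemma cvgCD u v l m : cvgC u l -> cvgC v m -> cvgC (fun n => u n + v n) (l + m).
Proof.
move=> ul vm e e0.
have e2_gt0 : 0 < e / 2 by rewrite divr_gt0.
have [N1 uN1] := ul _ e2_gt0; have [N2 vN2] := vm _ e2_gt0.
exists (maxn N1 N2) => n; rewrite geq_max => /andP[n1 n2].
rewrite opprD addrACA (splitr e); apply: le_lt_trans (le_normcD _ _) _.
exact: ltrD (uN1 n n1) (vN2 n n2).
Qed.

Lemma cvgCMl (c : C) u l : cvgC u l -> cvgC (fun n => c * u n) (c * l).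
Proof.
move=> ul e e0.
have c1_gt0 : 0 < normC c + 1 by rewrite ltr_wpDl ?normC_ge0.
have [N uN] := ul _ (divr_gt0 e0 c1_gt0).
exists N => n Nn; rewrite -mulrBr normCM.
move: (uN n Nn); rewrite ltr_pdivlMr // => /(le_lt_trans _); apply.
by rewrite mulrC ler_wpM2l ?normC_ge0 // lerDl.
Qed.

Lemma cvgC_sum (I : eqType) (s : seq I) (c : I -> C) (V : nat -> I -> C) (v : I -> C) :
  (forall x, x \in s -> cvgC (V ^~ x) (v x)) ->
  cvgC (fun n => \sum_(x <- s) c x * V n x) (\sum_(x <- s) c x * v x).
Proof.
elim: s => [|y s IHs] Vv.
  by rewrite big_nil; under [fun n => _]funext do rewrite big_nil; exact: cvgC_cst.
rewrite big_cons; under [fun n => _]funext do rewrite big_cons.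
apply: cvgCD; first by apply/cvgCMl/Vv; rewrite mem_head.
by apply: IHs => x xs; apply: Vv; rewrite in_cons xs orbT.
Qed.

Lemma cvgC_subseq (f : nat -> nat) u l :
  increasing_seq f -> cvgC u l -> cvgC (u \o f) l.
Proof.
move=> /unstable.mono_leq_infl f_infl ul e e0; have [N uN] := ul e e0.
by exists N => n Nn; apply: uN; exact: leq_trans Nn (f_infl n).
Qed.

Lemma cvgC_unique u l m : cvgC u l -> cvgC u m -> l = m.
Proof.
move=> ul um; apply/eqP/negPn/negP => lm.
have d_gt0 : 0 < normC (m - l).
  rewrite lt_neqAle normC_ge0 andbT eq_sym; apply/negP => /eqP/ComplexField.Normc.eq0_normc.
  by move/eqP; rewrite subr_eq0 eq_sym (negPf lm).
have d2_gt0 : 0 < normC (m - l) / 2 by rewrite divr_gt0.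
have [N1 uN1] := ul _ d2_gt0; have [N2 uN2] := um _ d2_gt0.
set w := u (maxn N1 N2).
have : normC (m - l) < normC (m - l).
  rewrite {2}(splitr (normC (m - l))).
  apply: le_lt_trans (ltrD (uN1 _ (leq_maxl N1 N2)) (uN2 _ (leq_maxr N1 N2))).
  have -> : m - l = (w - l) + - (w - m) by ring.
  by apply: le_trans (le_normcD _ _) _; rewrite -[X in _ <= _ + X]normCN.
by rewrite ltxx.
Qed.

Lemma cvgC_sum_lim (I : eqType) (s : seq I) (u : nat -> C) (c : I -> C)
    (V : nat -> I -> C) (v : I -> C) l :
  cvgC u l -> (forall x, x \in s -> cvgC (V ^~ x) (v x)) ->
  (forall n, u n = \sum_(x <- s) c x * V n x) -> l = \sum_(x <- s) c x * v x.
Proof. by move=> ul Vv uV; apply: cvgC_unique ul _; rewrite (funext uV); exact: cvgC_sum. Qed.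

Lemma bounded_real_subseq (u : nat -> R) (K : R) : (forall n, `|u n| <= K) ->
  exists2 f : nat -> nat, increasing_seq f & exists a : R,
    forall e, 0 < e -> exists N, forall n, (N <= n)%N -> `|u (f n) - a| < e.
Proof.
move=> uK; have bounded_u : bounded_fun u.
  exists K; split; first exact: num_real.
  by move=> M KM n _; exact: le_trans (uK n) (ltW KM).
have [f f_incr /cvgrPdist_lt uf] := bolzano_weierstrass bounded_u.
exists f => //; exists (limn (u \o f)) => e /uf [N _ ufN].
by exists N => n Nn; rewrite distrC; exact: ufN.
Qed.

Lemma bounded_cvgC_subseq (z : nat -> C) (K : R) : (forall n, normC (z n) <= K) ->
  exists2 f : nat -> nat, increasing_seq f & exists l, cvgC (z \o f) l.
Proof.
move=> zK.
have [f1 f1_incr [a Re_a]] := @bounded_real_subseq (fun n => complex.Re (z n)) K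
  (fun n => le_trans (normC_Re _) (zK n)).
have [f2 f2_incr [b Im_b]] := @bounded_real_subseq (fun n => complex.Im (z (f1 n))) K
  (fun n => le_trans (normC_Im _) (zK (f1 n))).
exists (f1 \o f2) => [m n|]; first by rewrite /= f1_incr; exact: f2_incr.
exists (a +i* b)%C => e e0.
have e2_gt0 : 0 < e / 2 by rewrite divr_gt0.
have [N1 ReN1] := Re_a _ e2_gt0; have [N2 ImN2] := Im_b _ e2_gt0.
exists (maxn N1 N2) => n; rewrite geq_max => /andP[n1 n2].
have n1' : (N1 <= f2 n)%N := leq_trans n1 (unstable.mono_leq_infl f2_incr n).
apply: le_lt_trans (normC_le_ReIm _) _; rewrite (splitr e).
by move: (ReN1 _ n1') (ImN2 _ n2) => /=; case: (z _) => x y /= ? ?; exact: ltrD.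
Qed.

Lemma bounded_cvgC_subseq_seq (I : eqType) (s : seq I) (A : nat -> I -> C) (K : R) :
  (forall n x, normC (A n x) <= K) ->
  exists2 f : nat -> nat, increasing_seq f & exists a : I -> C,
    forall x, x \in s -> cvgC (fun n => A (f n) x) (a x).
Proof.
move=> AK; elim: s => [|y s [f f_incr [a Aa]]].
  by exists id => //; exists (fun=> 0).
have [g g_incr [l Al]] := bounded_cvgC_subseq (fun n => AK (f n) y).
exists (f \o g) => [m n|]; first by rewrite /= f_incr; exact: g_incr.
exists (fun x => if x == y then l else a x) => x.
by rewrite in_cons; case: eqP => [-> //|_ /Aa /(cvgC_subseq g_incr)].
Qed.

Lemma finite_sum_double_limits (I : eqType) (s : seq I) (A B : nat -> I -> C)
    (t : I -> C) (K : R) :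
  (forall n x, normC (A n x) <= K) -> (forall n x, normC (B n x) <= K) ->
  let w n m := \sum_(x <- s) A n x * B m x * t x in
  forall l1 l2,
  (exists L, (forall n, cvgC (w n) (L n)) /\ cvgC L l1) ->
  (exists M, (forall m, cvgC (w ^~ m) (M m)) /\ cvgC M l2) ->
  l1 = l2.
Proof.
move=> AK BK w l1 l2 [L [wL Ll1]] [M [wM Ml2]].
have [f f_incr [a Aa]] := bounded_cvgC_subseq_seq s AK.
have [g g_incr [b Bb]] := bounded_cvgC_subseq_seq s BK.
have L_lim n : L n = \sum_(x <- s) (A n x * t x) * b x.
  apply: (cvgC_sum_lim (cvgC_subseq g_incr (wL n)) (V := fun m => B (g m))) => // m.
  by apply: eq_bigr => x _; ring.
have M_lim m : M m = \sum_(x <- s) (B m x * t x) * a x.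
  apply: (cvgC_sum_lim (cvgC_subseq f_incr (wM m)) (V := fun n => A (f n))) => // n.
  by apply: eq_bigr => x _; ring.
have -> : l1 = \sum_(x <- s) (b x * t x) * a x.
  apply: (cvgC_sum_lim (cvgC_subseq f_incr Ll1) (V := fun n => A (f n))) => // n.
  by rewrite /= L_lim; apply: eq_bigr => x _; ring.
have -> : l2 = \sum_(x <- s) (a x * t x) * b x.
  apply: (cvgC_sum_lim (cvgC_subseq g_incr Ml2) (V := fun m => B (g m))) => // m.
  by rewrite /= M_lim; apply: eq_bigr => x _; ring.
by apply: eq_bigr => x _; ring.
Qed.

End ComplexSequences.

Section GroupFacts.
Variable G : dgroup.
Local Notation "1" := (gone G).
Local Notation "x * y" := (gmul x y).
Local Notation "x ^-1" := (ginv x).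

Lemma gmulrV (x : G) : x * x^-1 = 1.
Proof. by rewrite -[x * _]gmul1 -(gmulV x^-1) -gmulA [x^-1 * (x * _)]gmulA gmulV gmul1. Qed.

Lemma gmul1r (x : G) : x * 1 = x.
Proof. by rewrite -(gmulV x) gmulA gmulrV gmul1. Qed.

Lemma gmulKVg (x y : G) : x * (x^-1 * y) = y.
Proof. by rewrite gmulA gmulrV gmul1. Qed.

Lemma gmulI (x : G) : injective (gmul x).
Proof. by move=> y z xyz; rewrite -[y]gmul1 -(gmulV x) -gmulA xyz gmulA gmulV gmul1. Qed.

Lemma ginv1 : 1^-1 = 1.
Proof. by rewrite -[1^-1]gmul1r gmulV. Qed.

Lemma ginv_eq1 (x : G) : (x^-1 == 1) = (x == 1).
Proof.
apply/eqP/eqP => [x1|->]; last exact: ginv1.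
by rewrite -[x]gmul1r -x1 gmulrV.
Qed.

Lemma gpowD (x : G) m n : gpow x (m + n) = gpow x m * gpow x n.
Proof. by elim: m => [|m IHm]; rewrite ?gmul1 // addSn /gpow /= -!/(gpow _ _) IHm gmulA. Qed.

End GroupFacts.

Section FiniteSupport.
Variable R : realType.
Local Notation C := (R[i]).
Local Notation normC := (@normC R).

Lemma esum_finsupp (T : choiceType) (s : seq T) (a : T -> R) : uniq s ->
  (forall x, 0 <= a x) -> (forall x, x \notin s -> a x = 0) ->
  \esum_(x in [set: T]) (a x)%:E = (\sum_(x <- s) a x)%:E.
Proof.
move=> us a_ge0 a_out; rewrite -sumEFin (fsbig_seq _ _ us).
rewrite -esum_fset ?finite_seq // => [|x _]; last by rewrite lee_fin.
rewrite [RHS]esum_mkcond; apply: eq_esum => x _.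
by case: ifPn => // /negP xs; rewrite a_out //; apply/negP => xs'; apply: xs; rewrite inE.
Qed.

Lemma sumR_finsupp (T : choiceType) (s : seq T) (h : T -> R) : uniq s ->
  (forall x, x \notin s -> h x = 0) -> sumR h = \sum_(x <- s) h x.
Proof.
move=> us h_out.
have pos_out x : x \notin s -> Num.max (h x) 0 = 0 by move/h_out->; rewrite maxxx.
have neg_out x : x \notin s -> Num.max (- h x) 0 = 0 by move/h_out->; rewrite oppr0 maxxx.
rewrite /sumR (esum_finsupp us (funrpos_ge0 h) pos_out).
rewrite (esum_finsupp us (funrneg_ge0 h) neg_out).
rewrite /= -sumrB; apply: eq_bigr => x _.
exact: (congr1 (@^~ x) (funrposBneg h)).
Qed.

Lemma sumC_finsupp (T : choiceType) (s : seq T) (h : T -> C) : uniq s ->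
  (forall x, x \notin s -> h x = 0) -> sumC h = \sum_(x <- s) h x.
Proof.
move=> us h_out; rewrite /sumC !(sumR_finsupp us) => [|x /h_out->//|x /h_out->//].
by elim: s {us h_out} => [|y s IHs]; rewrite ?big_nil ?big_cons // -IHs; case: (h y).
Qed.

Variable G : dgroup.

Lemma lp_finsupp (r : R) (f : G -> C) (s : seq G) : 0 < r -> uniq s ->
  (forall x, x \notin s -> f x = 0) ->
  lp_mem r f /\ lpnorm r f = (\sum_(x <- s) normC (f x) `^ r) `^ r^-1.
Proof.
move=> r_gt0 us f_out; rewrite /lp_mem /lpnorm (esum_finsupp us).
- by split; [exact: ltry|].
- by move=> x; exact: powR_ge0.
- by move=> x /f_out ->; rewrite /normC ComplexField.Normc.normc0 powR0 ?gt_eqF.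
Qed.

Lemma l1_finsupp (f : G -> C) (s : seq G) : uniq s ->
  (forall x, x \notin s -> f x = 0) ->
  l1_mem f /\ l1norm f = \sum_(x <- s) normC (f x).
Proof.
move=> us f_out; rewrite /l1_mem /l1norm (esum_finsupp us).
- by split; [exact: ltry|].
- by move=> x; exact: normC_ge0.
- by move=> x /f_out ->; exact: ComplexField.Normc.normc0.
Qed.

End FiniteSupport.

Section HerzNorm.
Variables (R : realType) (G : dgroup).
Local Notation C := (R[i]).
Local Notation normC := (@normC R).

Definition delta (a : G) : G -> C := fun y => (y == a)%:R.

Lemma conv_check_delta1 (u : G -> C) : Defs.conv u (check (delta (gone G))) =1 u.
Proof.
move=> x; rewrite /Defs.conv (@sumC_finsupp R G [:: x]) // ?big_seq1.
  by rewrite /check /delta ginv_eq1 gmulV eqxx mulr1.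
move=> y; rewrite inE /check /delta ginv_eq1 => /negPf yx.
case: eqP => [yx1|]; last by rewrite mulr0.
by move: yx; rewrite -[x](gmulKVg y) yx1 gmul1r eqxx.
Qed.

Lemma conj_exp_gt0 (p : R) : 1 < p -> 0 < conj_exp p.
Proof. by move=> p_gt1; rewrite divr_gt0 ?subr_gt0 // (lt_trans ltr01). Qed.

Lemma conj_expV (p : R) : 1 < p -> (conj_exp p)^-1 = 1 - p^-1.
Proof.
move=> p_gt1; have p_neq0 : p != 0 by rewrite gt_eqF // (lt_trans ltr01).
by rewrite /conj_exp invf_div; field.
Qed.

Lemma lpnorm0 (r : R) : 0 < r ->
  lp_mem r (fun _ : G => 0 : C) /\ lpnorm r (fun _ : G => 0 : C) = 0.
Proof.
move=> r_gt0; have [? ->] := @lp_finsupp R G r (fun=> 0) [::] r_gt0 isT (fun _ _ => erefl).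
by rewrite big_nil powR0 // invr_eq0 gt_eqF.
Qed.

Lemma lpnorm_delta (r : R) (a : G) : 0 < r -> lp_mem r (delta a) /\ lpnorm r (delta a) = 1.
Proof.
move=> r_gt0; have a_out x : x \notin [:: a] -> delta a x = 0.
  by rewrite inE /delta => /negPf ->.
have [? ->] := @lp_finsupp R G r (delta a) [:: a] r_gt0 isT a_out.
by rewrite big_seq1 /delta eqxx /normC ComplexField.Normc.normc1 !powR1.
Qed.

(* The one-term representation u = u * (delta 1)^v. *)
Lemma Apnorm_le_lqnorm_finsupp (p : R) (u : G -> C) (s : seq G) : 1 < p -> uniq s ->
  (forall x, x \notin s -> u x = 0) ->
  Ap_mem p u /\ Apnorm p u <= lpnorm (conj_exp p) u.
Proof.
move=> p_gt1 us u_out; set q := conj_exp p.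
have p_gt0 : 0 < p by rewrite (lt_trans ltr01).
have q_gt0 : 0 < q := conj_exp_gt0 p_gt1.
pose F (i : nat) : G -> C := if i == 0%N then delta (gone G) else fun=> 0.
pose H (i : nat) : G -> C := if i == 0%N then u else fun=> 0.
have cost : rep_cost p F H = (lpnorm q u)%:E.
  rewrite /rep_cost (@esum_finsupp R nat [:: 0%N]) ?big_seq1 //=.
  - by rewrite (lpnorm_delta _ p_gt0).2 mul1r.
  - by move=> i; rewrite mulr_ge0 // powR_ge0.
  - by move=> i; rewrite inE /F => /negPf ->; rewrite (lpnorm0 p_gt0).2 mul0r.
have lp_FH i : lp_mem p (F i) /\ lp_mem q (H i).
  case: i => [|i] /=; last by split; [case: (lpnorm0 p_gt0)|case: (lpnorm0 q_gt0)].
  by split; [case: (lpnorm_delta (gone G) p_gt0)|case: (lp_finsupp q_gt0 us u_out)].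
have conv_FH x : u x = sumC (fun i => Defs.conv (H i) (check (F i)) x).
  rewrite (@sumC_finsupp R nat [:: 0%N]) ?big_seq1 ?conv_check_delta1 // => i.
  rewrite inE /H => /negPf ->; rewrite /Defs.conv (@sumC_finsupp R G [::]) ?big_nil //.
  by move=> y _; rewrite mul0r.
have repr : Ap_repr p F H u by split; [|split; [rewrite cost ltry|]].
split; first by exists F, H.
apply: ge_inf; last by exists F, H; rewrite cost.
exists 0 => r [f [g [_ ->]]]; apply/fine_ge0/esum_ge0 => i _.
by rewrite lee_fin mulr_ge0 // powR_ge0.
Qed.

End HerzNorm.

Arguments delta {R G}.

Section UnitBallTest.
Variables (R : realType) (G : dgroup).
Local Notation C := (R[i]).
Local Notation normC := (@normC R).

Lemma sum_const_on (s : seq G) (F : G -> R) (k : R) :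
  (forall x, x \in s -> F x = k) -> \sum_(x <- s) F x = k * (size s)%:R.
Proof.
move=> Fk; rewrite big_seq (eq_bigr _ Fk) -big_seq.
by rewrite big_const_seq count_predT iter_addr_0 mulr_natr.
Qed.

Lemma uniq_size_le (p alpha : R) : 1 < p ->
  (forall f : G -> C, l1_mem f -> Apnorm p f <= 1 -> l1norm f <= alpha) ->
  forall s : seq G, uniq s -> (size s)%:R <= alpha `^ p.
Proof.
move=> p_gt1 ball_bounded s us; have [->|s_neq0] := eqVneq s [::]; first exact: powR_ge0.
set n : R := (size s)%:R; set q := conj_exp p.
have n_gt0 : 0 < n by rewrite ltr0n lt0n size_eq0.
have p_gt0 : 0 < p by rewrite (lt_trans ltr01).
set c := n `^ (- q^-1).
have c_ge0 : 0 <= c by exact: powR_ge0.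
pose u : G -> C := fun x => if x \in s then c%:C%C else 0.
have u_out x : x \notin s -> u x = 0 by rewrite /u => /negPf ->.
have u_s x : x \in s -> normC (u x) = c by rewrite /u => ->; exact: normC_real.
have u_ball : Apnorm p u <= 1.
  apply: le_trans (Apnorm_le_lqnorm_finsupp p_gt1 us u_out).2 _.
  rewrite (lp_finsupp (conj_exp_gt0 p_gt1) us u_out).2.
  rewrite (@sum_const_on s _ (c `^ q)) => [|x /u_s -> //].
  rewrite -powRrM mulNr mulVf ?gt_eqF ?conj_exp_gt0 // (powR_inv1 (ltW n_gt0)).
  by rewrite mulVf ?gt_eqF // powR1.
have [u_l1 u_l1norm] := l1_finsupp us u_out.
have := ball_bounded u u_l1 u_ball; rewrite u_l1norm (sum_const_on u_s) -/n.
have -> : c * n = n `^ p^-1.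
  rewrite -[X in _ * X](powRr1 (ltW n_gt0)) -powRD ?(gt_eqF n_gt0) ?implybT //.
  by rewrite /q conj_expV // opprB subrK.
move=> n_le; rewrite -[n](powRr1 (ltW n_gt0)) -(@mulVf _ p) ?gt_eqF // powRrM.
have alpha_ge0 : 0 <= alpha := le_trans (powR_ge0 _ _) n_le.
by apply: (ge0_ler_powR (ltW p_gt0)) n_le; rewrite nnegrE ?powR_ge0.
Qed.

End UnitBallTest.

Section FiniteGroup.
Variables (R : realType) (G : dgroup).
Local Notation C := (R[i]).
Local Notation normC := (@normC R).
Variable s : seq G.
Hypotheses (s_uniq : uniq s) (s_total : forall x, x \in s).

Lemma finsupp_total (f : G -> C) x : x \notin s -> f x = 0.
Proof. by rewrite s_total. Qed.

Lemma linear_expand_delta (T : (G -> C) -> C) :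
  (forall f g, T (fun x => f x + g x) = T f + T g) ->
  (forall c f, T (fun x => c * f x) = c * T f) ->
  forall f, T f = \sum_(a <- s) f a * T (delta a).
Proof.
move=> T_add T_scale f.
have T_sum (r : seq G) (c : G -> C) :
    T (fun x => \sum_(a <- r) c a * delta a x) = \sum_(a <- r) c a * T (delta a).
  elim: r => [|b r IHr].
    under [fun x => _]funext do rewrite big_nil.
    rewrite big_nil -[RHS](mul0r (T (fun=> 0))) -T_scale.
    by congr T; apply: funext => x; rewrite mulr0.
  under [fun x => _]funext do rewrite big_cons.
  by rewrite big_cons T_add T_scale IHr.
rewrite -T_sum; congr T; apply: funext => y.
rewrite (bigD1_seq y) //= /delta eqxx mulr1 big1 ?addr0 // => a /negPf ay.
by rewrite eq_sym ay mulr0.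
Qed.

Lemma arens_regular_finite (S : set (G -> C)) (N : (G -> C) -> R) (K : R) :
  (forall f, S f) -> (forall f, N f <= 1 -> forall x, normC (f x) <= K) ->
  arens_regular S N.
Proof.
move=> S_total N_ball a b T a_ball b_ball [T_add [T_scale _]] l1 l2 [L [aL Ll1]] [M [bM Ml2]].
have T_expand := linear_expand_delta (fun f g => T_add f g (S_total f) (S_total g))
  (fun c f => T_scale c f (S_total f)).
apply: (finite_sum_double_limits (t := fun x => T (delta x))
  (fun n => N_ball _ (a_ball n).2) (fun n => N_ball _ (b_ball n).2)).
- exists L; split => // n.
  have := aL n; under [fun m => _]funext do rewrite T_expand.
  by apply.
- exists M; split => // m.
  have := bM m; under [fun n => _]funext do rewrite T_expand.
  by apply.
Qed.

Lemma Ap_ball_pointwise_bounded (p alpha : R) :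
  (forall f : G -> C, l1_mem f -> Apnorm p f <= 1 -> l1norm f <= alpha) ->
  forall f : G -> C, Apnorm p f <= 1 -> forall x, normC (f x) <= alpha.
Proof.
move=> ball_bounded f f_ball x.
have [f_l1 f_l1norm] := l1_finsupp s_uniq (@finsupp_total f).
apply: le_trans (ball_bounded f f_l1 f_ball); rewrite f_l1norm (bigD1_seq x) //=.
by rewrite lerDl sumr_ge0 // => y _; exact: normC_ge0.
Qed.

End FiniteGroup.

Section BoundedUniqSeqs.
Variables (G : dgroup) (N : nat).
Hypothesis uniq_lt : forall s : seq G, uniq s -> (size s < N)%N.

Lemma enum_of_uniq_bounded : exists s : seq G, uniq s /\ forall x, x \in s.
Proof.
apply: contrapT => no_enum.
have grow n : exists s : seq G, uniq s /\ size s = n.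
  elim: n => [|n [s [us <-]]]; first by exists [::].
  have /existsNP [x /negP xs] : ~ (forall x, x \in s) by move=> s_total; apply: no_enum; exists s.
  by exists (x :: s); rewrite /= xs us.
have [s [us sN]] := grow N.
by have := uniq_lt us; rewrite sN ltnn.
Qed.

Lemma has_card_lt (H : set G) n : has_card H n -> (n < N)%N.
Proof.
case=> e [e_inj _]; have := @uniq_lt (map e (enum 'I_n)).
by rewrite map_inj_uniq // enum_uniq size_map size_enum_ord; apply.
Qed.

Lemma order_le_of_uniq_bounded (x : G) : order_le x N.
Proof.
have /negP := ltnn N; rewrite -[X in (X < _)%N](size_iota 0 N) -(size_map (gpow x)).
case/(contra_notN (@uniq_lt _))/(uniqPn (gone G)) => i [j [ij]].
rewrite size_map size_iota => jN; have iN := ltn_trans ij jN.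
rewrite !(nth_map 0%N) ?size_iota // !nth_iota // !add0n => xij.
exists (j - i)%N; split; first by rewrite subn_gt0 ij (leq_trans (leq_subr _ _) (ltnW jN)).
by apply: (@gmulI G (gpow x i)); rewrite -gpowD subnKC ?(ltnW ij) // gmul1r xij.
Qed.

End BoundedUniqSeqs.

Theorem theorem3p7 (R : realType) (G : dgroup) (p : R) (hp : 1 < p) :
  (exists alpha : R, 0 < alpha /\
     forall f : G -> R[i], l1_mem f -> Apnorm p f <= 1 -> l1norm f <= alpha) ->
  [/\ @arens_regular R G (@l1_mem R G) (@Apnorm R G p),
      @arens_regular R G (@Ap_mem R G p) (@Apnorm R G p),
      ~ (exists H : set G, is_subgroup H /\ abelian_set H /\ ~ finite_set H),
      ~ (exists (Hs : nat -> set G) (sz : nat -> nat),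
            forall n, is_subgroup (Hs n) /\ has_card (Hs n) (sz n) /\ (sz n < sz n.+1)%N)
    & exists M : nat, (0 < M)%N /\ forall x : G, order_le x M].
Proof.
move=> [alpha [_ ball_bounded]].
set N := (Num.truncn (alpha `^ p)).+1.
have uniq_lt (s : seq G) : uniq s -> (size s < N)%N.
  move=> us; rewrite -(ltr_nat R).
  exact: le_lt_trans (uniq_size_le hp ball_bounded us) (truncnS_gt _).
have [s [us s_total]] := enum_of_uniq_bounded uniq_lt.
have ball_pointwise := Ap_ball_pointwise_bounded us s_total ball_bounded.
split.
- apply: (arens_regular_finite us s_total _ ball_pointwise) => f.
  exact: (l1_finsupp us (finsupp_total s_total f)).1.
- apply: (arens_regular_finite us s_total _ ball_pointwise) => f.
  exact: (Apnorm_le_lqnorm_finsupp hp us (finsupp_total s_total f)).1.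
- case=> H [_ [_]]; apply; apply: sub_finite_set (finite_seq s) => x _.
  exact: s_total.
- case=> Hs [sz Hs_sz]; have sz_ge n : (n <= sz n)%N.
    by elim: n => // n IHn; exact: leq_ltn_trans IHn (Hs_sz n).2.2.
  by have := has_card_lt uniq_lt (Hs_sz N).2.1; rewrite ltnNge sz_ge.
- by exists N; split => // x; exact: order_le_of_uniq_bounded.
Qed.
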